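(* Let $d\ge2$, $N\ge1$ and let $\rho$ be a state on $(\mathbb{C}^d)^{\otimes N}$. For operators $\lambda_1,\dots,\lambda_N$ on $\mathbb{C}^d$ define $$\mathcal{R}(\lambda_1,\dots,\lambda_N)=\int dU_1\cdots\int dU_N\;\Big|\mathrm{Tr}\Big(\rho\,\bigotimes_{n=1}^{N}U_n^\dagger\lambda_n^\dagger U_n\Big)\Big|^2,$$ where each integral is over $U(d)$ with respect to the normalized Haar measure. Then $\mathcal{R}(\lambda_1,\dots,\lambda_N)$ takes the same value for all choices of $\lambda_1,\dots,\lambda_N$ satisfying $\mathrm{Tr}(\lambda_n)=0$ and $\mathrm{Tr}(\lambda_n\lambda_n^\dagger)=d$ for every $n$. *)

From HB Require Import structures.
From mathcomp Require Import all_boot all_order all_algebra.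
From mathcomp Require Import reals.
From mathcomp.real_closed Require Import complex mxtens.

Set Implicit Arguments.
Unset Strict Implicit.
Unset Printing Implicit Defensive.

Import Order.TTheory GRing.Theory Num.Theory.
Local Open Scope ring_scope.
Local Open Scope complex_scope.

Section Defs.
Variable R : realType.
Local Notation C := (R[i]).

Definition adj {m n} (A : 'M[C]_(m, n)) : 'M[C]_(n, m) :=
  \matrix_(i, j) (A j i)^*.

Definition unitary {d} (U : 'M[C]_d) : Prop := U *m adj U = 1%:M.

Definition abs2 (z : C) : R := complex.Re z ^+ 2 + complex.Im z ^+ 2.

Definition cabs (z : C) : R := Normc.normc z.

Definition is_state {n} (rho : 'M[C]_n) : Prop :=
  [/\ adj rho = rho,
      (forall v : 'cV[C]_n, 0 <= (adj v *m rho *m v) 0 0)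
    & \tr rho = 1].

Fixpoint tensN {d} (n : nat) (f : nat -> 'M[C]_d) : 'M[C]_(d ^ n) :=
  match n return 'M[C]_(d ^ n) with
  | 0 => 1%:M
  | n'.+1 => castmx (esym (expnS d n'), esym (expnS d n'))
               (f 0%N *t tensN n' (fun k => f k.+1))
  end.

Definition cont_on_unitary {d} (f : 'M[C]_d -> R) : Prop :=
  forall U, unitary U -> forall e : R, 0 < e -> exists2 dl : R, 0 < dl &
    forall V, unitary V -> (forall i j, cabs (V i j - U i j) < dl) ->
      `|f V - f U| < e.

(* I is (the integral against) the normalized Haar measure on U(d):
   a normalized positive left-invariant linear functional on the continuous
   real functions on U(d), depending only on the values on U(d).  By the Riesz
   representation theorem and uniqueness of Haar measure, the only such
   functional is f |-> \int f dU (normalized Haar measure). *)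
Definition haar_integral d (I : ('M[C]_d -> R) -> R) : Prop :=
  [/\ (forall f g, (forall U, unitary U -> f U = g U) -> I f = I g),
      (forall f g, cont_on_unitary f -> cont_on_unitary g ->
          I (fun U => f U + g U) = I f + I g),
      (forall (c : R) f, cont_on_unitary f -> I (fun U => c * f U) = c * I f),
      (forall f, cont_on_unitary f -> (forall U, unitary U -> 0 <= f U) ->
          0 <= I f)
    & I (fun _ => 1) = 1
    /\ (forall V f, unitary V -> cont_on_unitary f ->
          I (fun U => f (V *m U)) = I f)].

Fixpoint iter_int {d} (I : ('M[C]_d -> R) -> R) (n : nat)
    (F : (nat -> 'M[C]_d) -> R) : R :=
  match n with
  | 0 => F (fun _ => 1%:M)
  | n'.+1 => I (fun U => iter_int I n'
                  (fun Us => F (fun k => if k is k'.+1 then Us k' else U)))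
  end.

(* R(lambda_1, ..., lambda_N)  (indices shifted to 0 .. N-1) *)
Definition Rfun {d N} (I : ('M[C]_d -> R) -> R) (rho : 'M[C]_(d ^ N))
    (lam : nat -> 'M[C]_d) : R :=
  iter_int I N (fun Us =>
    abs2 (\tr (rho *m tensN N (fun n => adj (Us n) *m adj (lam n) *m Us n)))).

End Defs.

(* Expanding |Tr(rho (x)_n U_n^+ l_n^+ U_n)|^2 by multilinearity of the trace in
   the tensor factors writes the integrand as a combination, with coefficients
   depending only on rho, of products over n of the functions
     U |-> (U^+ B U)_ab conj((U^+ B U)_ce),   B = l_n^+,
   so the iterated integral is the same combination of the products of their
   Haar integrals H(B).  It remains to see that H(B) depends only on Tr B and
   Tr(B B^+).  Expanding H(B) in the fourth moments
     m_ijkl = \int conj(U_ia) U_jb U_kc conj(U_le) dU,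
   left invariance under diagonal phase matrices kills every moment except
   those with i = j, k = l or i = k, j = l; invariance under permutation
   matrices leaves three values alpha, beta, gamma; and invariance under the
   unitary (3/5) 1 + (4/5) i S, S a transposition matrix, forces
   gamma = alpha + beta.  Hence H(B) = alpha |Tr B|^2 + beta Tr(B B^+), which
   is beta d when Tr B = 0 and Tr(B B^+) = d. *)

From Pilot Require Import Defs.
From HB Require Import structures.
From mathcomp Require Import all_boot all_order all_algebra.
From mathcomp Require Import reals.
From mathcomp.real_closed Require Import complex mxtens.
From mathcomp Require Import ring lra.
From mathcomp Require Import fingroup perm.
From Stdlib Require Import FunctionalExtensionality.
Import Order.TTheory GRing.Theory Num.Theory.
Local Open Scope ring_scope.
Local Open Scope complex_scope.
(* In [ring_scope], [x^*] would denote [Num.conj]; make it the [conjc] of [Defs]. *)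
Local Notation "x ^*" := (conjc x) : ring_scope.

Set Implicit Arguments.
Unset Strict Implicit.
Unset Printing Implicit Defensive.

Section ComplexContinuity.
Variables (R : realType) (d : nat).
Local Notation C := R[i].
Local Notation M := 'M[C]_d.

Lemma cabs_ge0 (z : C) : 0 <= cabs z.
Proof. by case: z => a b; rewrite /cabs sqrtr_ge0. Qed.

Lemma cabs_Re (z : C) : `|complex.Re z| <= cabs z.
Proof.
case: z => a b; rewrite /cabs /= -sqrtr_sqr ler_sqrt ?addr_ge0 ?sqr_ge0 //.
by rewrite lerDl sqr_ge0.
Qed.

Lemma cabs_Im (z : C) : `|complex.Im z| <= cabs z.
Proof.
case: z => a b; rewrite /cabs /= -sqrtr_sqr ler_sqrt ?addr_ge0 ?sqr_ge0 //.
by rewrite lerDr sqr_ge0.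
Qed.

Definition ccont_on_unitary (f : M -> C) : Prop :=
  forall U, unitary U -> forall e : R, 0 < e -> exists2 dl : R, 0 < dl &
    forall V, unitary V -> (forall i j, cabs (V i j - U i j) < dl) ->
      cabs (f V - f U) < e.

Lemma ccont_cst c : ccont_on_unitary (fun _ => c).
Proof. by move=> U _ e e0; exists 1 => // V _ _; rewrite subrr /cabs Normc.normc0. Qed.

Lemma ccont_entry i j : ccont_on_unitary (fun U => U i j).
Proof. by move=> U _ e e0; exists e. Qed.

Lemma ccont_conj f : ccont_on_unitary f -> ccont_on_unitary (fun U => (f U)^*).
Proof.
move=> cf U hU e e0; have [dl dl0 H] := cf U hU e e0; exists dl => // V hV HV.
rewrite -rmorphB; move: (H V hV HV); rewrite /cabs.
by case: (f V - f U) => a b; rewrite /= sqrrN.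
Qed.

Lemma ccontD f g : ccont_on_unitary f -> ccont_on_unitary g ->
  ccont_on_unitary (fun U => f U + g U).
Proof.
move=> cf cg U hU e e0; have e20 : 0 < e / 2 by rewrite divr_gt0.
have [d1 d10 H1] := cf U hU _ e20; have [d2 d20 H2] := cg U hU _ e20.
exists (Num.min d1 d2) => [|V hV HV]; first by rewrite lt_min d10 d20.
have /(H1 V hV) h1 : forall i j, cabs (V i j - U i j) < d1.
  by move=> i j; apply: lt_le_trans (HV i j) _; rewrite ge_min lexx.
have /(H2 V hV) h2 : forall i j, cabs (V i j - U i j) < d2.
  by move=> i j; apply: lt_le_trans (HV i j) _; rewrite ge_min lexx orbT.
rewrite opprD addrACA (splitr e); apply: le_lt_trans (le_normcD _ _) _.
exact: ltrD.
Qed.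

Lemma ccontM f g : ccont_on_unitary f -> ccont_on_unitary g ->
  ccont_on_unitary (fun U => f U * g U).
Proof.
move=> cf cg U hU e e0.
set A := cabs (f U); set B := cabs (g U).
have A0 : 0 <= A by apply: cabs_ge0.
have B0 : 0 <= B by apply: cabs_ge0.
pose ef := Num.min 1 (e / (2 * (B + 1))); pose eg := e / (2 * (A + 1)).
have ef0 : 0 < ef by rewrite lt_min ltr01 divr_gt0 // mulr_gt0 // ltr_wpDl.
have eg0 : 0 < eg by rewrite divr_gt0 // mulr_gt0 // ltr_wpDl.
have [d1 d10 H1] := cf U hU _ ef0; have [d2 d20 H2] := cg U hU _ eg0.
exists (Num.min d1 d2) => [|V hV HV]; first by rewrite lt_min d10 d20.
have /(H1 V hV) h1 : forall i j, cabs (V i j - U i j) < d1.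
  by move=> i j; apply: lt_le_trans (HV i j) _; rewrite ge_min lexx.
have /(H2 V hV) h2 : forall i j, cabs (V i j - U i j) < d2.
  by move=> i j; apply: lt_le_trans (HV i j) _; rewrite ge_min lexx orbT.
have -> : f V * g V - f U * g U = f V * (g V - g U) + (f V - f U) * g U by ring.
apply: le_lt_trans (le_normcD _ _) _; rewrite /cabs !Normc.normcM.
move: h1 h2; rewrite lt_min => /andP[h1 h1'] h2.
set nf := cabs (f V - f U) in h1 h1' *; set ng := cabs (g V - g U) in h2 *.
have nf0 : 0 <= nf by apply: cabs_ge0.
have ng0 : 0 <= ng by apply: cabs_ge0.
have fV0 : 0 <= cabs (f V) by apply: cabs_ge0.
have fVA : cabs (f V) <= A + 1.
  have := le_normcD (f U) (f V - f U); rewrite addrC subrK -/A => /le_trans.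
  by apply; rewrite lerD2l ltW.
have {h1'}h1' : nf * (2 * (B + 1)) <= e.
  by rewrite -ler_pdivlMr ?mulr_gt0 ?ltr_wpDl // ltW.
have {h2}h2 : ng * (2 * (A + 1)) < e by rewrite -ltr_pdivlMr ?mulr_gt0 ?ltr_wpDl.
change (cabs (f V) * ng + nf * B < e); nra.
Qed.

Lemma ccont_sum (J : Type) (s : seq J) (F : J -> M -> C) :
  (forall j, ccont_on_unitary (F j)) ->
  ccont_on_unitary (fun U => \sum_(j <- s) F j U).
Proof.
move=> cF; elim: s => [|j s IH].
  by under [fun U => _]functional_extensionality => U do rewrite big_nil;
     exact: ccont_cst.
under [fun U => _]functional_extensionality => U do rewrite big_cons.
exact: ccontD.
Qed.

Lemma cont_on_unitary_Re f : ccont_on_unitary f ->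
  cont_on_unitary (fun U => complex.Re (f U)).
Proof.
move=> cf U hU e e0; have [dl dl0 H] := cf U hU e e0; exists dl => // V hV HV.
apply: le_lt_trans (H V hV HV).
by have := cabs_Re (f V - f U); rewrite raddfB.
Qed.

Lemma cont_on_unitary_Im f : ccont_on_unitary f ->
  cont_on_unitary (fun U => complex.Im (f U)).
Proof.
move=> cf U hU e e0; have [dl dl0 H] := cf U hU e e0; exists dl => // V hV HV.
apply: le_lt_trans (H V hV HV).
by have := cabs_Im (f V - f U); rewrite raddfB.
Qed.

End ComplexContinuity.

Section ComplexHaar.
Variables (R : realType) (d : nat).
Local Notation C := R[i].
Local Notation M := 'M[C]_d.
Variable I : (M -> R) -> R.
Hypothesis hI : haar_integral I.

Definition haarC (f : M -> C) : C :=
  I (fun U => complex.Re (f U)) +i* I (fun U => complex.Im (f U)).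

Lemma haarCD f g : ccont_on_unitary f -> ccont_on_unitary g ->
  haarC (fun U => f U + g U) = haarC f + haarC g.
Proof.
case: hI => _ hadd _ _ _ cf cg; rewrite /haarC.
have ReD U : complex.Re (f U + g U) = complex.Re (f U) + complex.Re (g U).
  by case: (f U); case: (g U).
have ImD U : complex.Im (f U + g U) = complex.Im (f U) + complex.Im (g U).
  by case: (f U); case: (g U).
rewrite (functional_extensionality _ _ ReD) (functional_extensionality _ _ ImD).
by rewrite !hadd //; apply: cont_on_unitary_Re || apply: cont_on_unitary_Im.
Qed.

Lemma haarCZ c f : ccont_on_unitary f -> haarC (fun U => c * f U) = c * haarC f.
Proof.
case: hI => _ hadd hsc _ _ cf.
have cRe := cont_on_unitary_Re cf; have cIm := cont_on_unitary_Im cf.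
have cRe' r : cont_on_unitary (fun U => r * complex.Re (f U)).
  have := cont_on_unitary_Re (ccontM (ccont_cst r%:C) cf).
  by congr cont_on_unitary; apply: functional_extensionality => U;
     case: (f U) => ? ? /=; rewrite mul0r subr0.
have cIm' r : cont_on_unitary (fun U => r * complex.Im (f U)).
  have := cont_on_unitary_Im (ccontM (ccont_cst r%:C) cf).
  by congr cont_on_unitary; apply: functional_extensionality => U;
     case: (f U) => ? ? /=; rewrite mul0r addr0.
case: c => a b; rewrite /haarC.
have ReZ U : complex.Re ((a +i* b) * f U) =
    a * complex.Re (f U) + (- b) * complex.Im (f U).
  by case: (f U) => ? ? /=; rewrite mulNr.
have ImZ U : complex.Im ((a +i* b) * f U) =
    a * complex.Im (f U) + b * complex.Re (f U).
  by case: (f U).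
rewrite (functional_extensionality _ _ ReZ) (functional_extensionality _ _ ImZ).
by rewrite !hadd ?hsc // mulNr.
Qed.

Lemma haarC0 : haarC (fun _ => 0) = 0.
Proof.
by have := haarCZ 0 (ccont_cst 0); rewrite !mul0r.
Qed.

Lemma haarC_sum (J : Type) (s : seq J) (F : J -> M -> C) :
  (forall j, ccont_on_unitary (F j)) ->
  haarC (fun U => \sum_(j <- s) F j U) = \sum_(j <- s) haarC (F j).
Proof.
move=> cF; elim: s => [|j s IH].
  have E U : \sum_(j <- [::]) F j U = 0 by rewrite big_nil.
  by rewrite (functional_extensionality _ _ E) haarC0 big_nil.
have E U : \sum_(j0 <- j :: s) F j0 U = F j U + \sum_(j0 <- s) F j0 U.
  by rewrite big_cons.
rewrite (functional_extensionality _ _ E) haarCD ?IH ?big_cons //.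
exact: ccont_sum.
Qed.

Lemma haarC_mulmxl W f : unitary W -> ccont_on_unitary f ->
  haarC (fun U => f (W *m U)) = haarC f.
Proof.
case: hI => _ _ _ _ [_ hinv] hW cf; rewrite /haarC.
rewrite (hinv W (fun U => complex.Re (f U))) ?(hinv W (fun U => complex.Im (f U))) //.
- exact: cont_on_unitary_Im.
- exact: cont_on_unitary_Re.
Qed.

End ComplexHaar.

Lemma big_pair (V : nmodType) (T : finType) (x0 x1 : T) (F : T -> V) :
  x0 != x1 -> (forall y, y != x0 -> y != x1 -> F y = 0) ->
  \sum_y F y = F x0 + F x1.
Proof.
move=> x01 F0; rewrite (bigD1 x0) //= (bigD1 x1) 1?eq_sym //= big1 ?addr0 // => y.
by case/andP => y1 y0; apply: F0.
Qed.

Section Words.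
Variable R : realType.
Local Notation C := R[i].

Fixpoint sum_words (T : finType) (n : nat) (F : seq T -> C) : C :=
  if n is n'.+1 then \sum_(q : T) sum_words n' (fun s => F (q :: s)) else F [::].

Fixpoint prod_word (T : Type) (s : seq T) (G : nat -> T -> C) : C :=
  if s is q :: s' then G 0%N q * prod_word s' (fun m => G m.+1) else 1.

Lemma eq_sum_words (T : finType) n (F F' : seq T -> C) :
  (forall s, size s = n -> F s = F' s) -> sum_words n F = sum_words n F'.
Proof.
elim: n F F' => [|n IH] F F' eqF /=; first exact: eqF.
by apply: eq_bigr => q _; apply: IH => s hs; apply: eqF; rewrite /= hs.
Qed.

Lemma sum_words_sum (T J : finType) n (F : J -> seq T -> C) :
  sum_words n (fun s => \sum_j F j s) = \sum_j sum_words n (F j).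
Proof.
elim: n F => [|n IH] F //=.
by under eq_bigr => q _ do rewrite IH; rewrite exchange_big.
Qed.

Lemma mulr_sum_words (T : finType) n c (F : seq T -> C) :
  c * sum_words n F = sum_words n (fun s => c * F s).
Proof.
elim: n F => [|n IH] F //=.
by rewrite mulr_sumr; apply: eq_bigr => q _; rewrite IH.
Qed.

Lemma conj_sum_words (T : finType) n (F : seq T -> C) :
  (sum_words n F)^* = sum_words n (fun s => (F s)^*).
Proof.
elim: n F => [|n IH] F //=.
by rewrite rmorph_sum; apply: eq_bigr => q _; exact: IH.
Qed.

Lemma sum_words_mul (T : finType) n (F G : seq T -> C) :
  sum_words n F * sum_words n G =
  sum_words n (fun qs : seq (T * T) => F (unzip1 qs) * G (unzip2 qs)).
Proof.
elim: n F G => [|n IH] F G //=.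
rewrite mulr_suml (eq_bigr (fun q => \sum_q' sum_words n (fun qs : seq (T * T) =>
  F (q :: unzip1 qs) * G (q' :: unzip2 qs)))).
  by rewrite pair_big /=; apply: eq_bigr => -[q q'].
by move=> q _; rewrite mulr_sumr; apply: eq_bigr => q' _; rewrite IH.
Qed.

Lemma eq_prod_word (T : Type) (s : seq T) (G G' : nat -> T -> C) :
  (forall m q, (m < size s)%N -> G m q = G' m q) -> prod_word s G = prod_word s G'.
Proof.
elim: s G G' => [|q s IH] G G' eqG //=.
by rewrite eqG // (IH _ (fun m => G' m.+1)) // => m q' hm; apply: eqG.
Qed.

Lemma conj_prod_word (T : Type) (s : seq T) (G : nat -> T -> C) :
  (prod_word s G)^* = prod_word s (fun m q => (G m q)^*).
Proof.
elim: s G => [|q s IH] G /=; first exact: conjc1.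
by rewrite rmorphM; congr (_ * _); apply: IH.
Qed.

Lemma prod_word_unzip (T : Type) (qs : seq (T * T)) (G G' : nat -> T -> C) :
  prod_word (unzip1 qs) G * prod_word (unzip2 qs) G' =
  prod_word qs (fun m q => G m q.1 * G' m q.2).
Proof.
elim: qs G G' => [|[q q'] qs IH] G G' /=; first by rewrite mulr1.
by rewrite -(IH (fun m => G m.+1) (fun m => G' m.+1)) mulrACA.
Qed.

End Words.

Lemma sum_mxtens_index (V : nmodType) m n (F : 'I_(m * n) -> V) :
  \sum_x F x = \sum_(i : 'I_m) \sum_(k : 'I_n) F (mxtens_index (i, k)).
Proof.
rewrite pair_big /= (reindex (@mxtens_index m n)) /=; first by apply: eq_bigr => -[].
by exists (@mxtens_unindex m n) => x _; rewrite (mxtens_indexK, mxtens_unindexK).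
Qed.

Section TensorTrace.
Variable R : realType.
Local Notation C := R[i].

Lemma mxtrace_mul_castmx m n (e : n = m) (A : 'M[C]_n) (B : 'M[C]_m) :
  \tr (A *m castmx (esym e, esym e) B) = \tr (castmx (e, e) A *m B).
Proof. by case: m / e in B *; rewrite !castmx_id. Qed.

Definition tens_block d n (A : 'M[C]_(d * n)) (i j : 'I_d) : 'M[C]_n :=
  \matrix_(k, l) A (mxtens_index (i, k)) (mxtens_index (j, l)).

Lemma mxtrace_mul_tensmx d n (A : 'M[C]_(d * n)) (X : 'M[C]_d) (T : 'M[C]_n) :
  \tr (A *m (X *t T)) =
  \sum_(p : 'I_d * 'I_d) X p.1 p.2 * \tr (tens_block A p.2 p.1 *m T).
Proof.
rewrite -(pair_bigA _ (fun j i => X j i * \tr (tens_block A i j *m T))) /=.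
rewrite /mxtrace sum_mxtens_index [RHS]exchange_big /=; apply: eq_bigr => i _.
under [RHS]eq_bigr => j _ do rewrite mulr_sumr.
rewrite [RHS]exchange_big /=; apply: eq_bigr => k _.
rewrite !mxE sum_mxtens_index; apply: eq_bigr => j _.
rewrite !mxE mulr_sumr; apply: eq_bigr => l _.
by rewrite tensmxE !mxE mulrCA.
Qed.

Lemma mxtrace_mul_tensN d N (rho : 'M[C]_(d ^ N)) :
  {kap : seq ('I_d * 'I_d) -> C | forall Y : nat -> 'M[C]_d,
    \tr (rho *m tensN N Y) =
    sum_words N (fun s => kap s * prod_word s (fun m p => Y m p.1 p.2))}.
Proof.
elim: N rho => [|N IH] rho.
  by exists (fun _ => \tr rho) => Y /=; rewrite mulmx1 mulr1.
pose rho' := castmx (expnS d N, expnS d N) rho.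
pose kap s := if s is p :: s' then sval (IH (tens_block rho' p.2 p.1)) s' else 0.
exists kap => Y /=.
rewrite mxtrace_mul_castmx mxtrace_mul_tensmx; apply: eq_bigr => p _.
by rewrite (svalP (IH _)) mulr_sum_words; apply: eq_sum_words => s _; rewrite mulrCA.
Qed.

End TensorTrace.

Section IteratedIntegral.
Variables (R : realType) (d : nat).
Local Notation C := R[i].
Local Notation M := 'M[C]_d.
Variable I : (M -> R) -> R.
Hypothesis hI : haar_integral I.

Lemma iter_int_multilinear (T : finType) n (c : seq T -> C)
    (G : nat -> T -> M -> C) :
  (forall m q, ccont_on_unitary (G m q)) ->
  iter_int I n (fun Us =>
    complex.Re (sum_words n (fun s => c s * prod_word s (fun m q => G m q (Us m))))) =
  complex.Re (sum_words n (fun s => c s * prod_word s (fun m q => haarC I (G m q)))).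
Proof.
elim: n c G => [//|n IH] c G cG /=.
pose P s := prod_word s (fun m q => haarC I (G m.+1 q)).
pose w q := sum_words n (fun s => c (q :: s) * P s).
have inner U : iter_int I n (fun Us => complex.Re (\sum_q sum_words n (fun s =>
      c (q :: s) * (G 0%N q U * prod_word s (fun m q => G m.+1 q (Us m)))))) =
    complex.Re (\sum_q w q * G 0%N q U).
  have E Us : complex.Re (\sum_q sum_words n (fun s =>
      c (q :: s) * (G 0%N q U * prod_word s (fun m q => G m.+1 q (Us m))))) =
    complex.Re (sum_words n (fun s => (\sum_q c (q :: s) * G 0%N q U) *
      prod_word s (fun m q => G m.+1 q (Us m)))).
    rewrite -sum_words_sum; congr complex.Re; apply: eq_sum_words => s _.
    by rewrite mulr_suml; apply: eq_bigr => q _; rewrite mulrA.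
  rewrite (functional_extensionality _ _ E) (IH _ (fun m => G m.+1)) //.
  congr complex.Re; under [RHS]eq_bigr => q _ do rewrite mulrC mulr_sum_words.
  rewrite -sum_words_sum; apply: eq_sum_words => s _; rewrite mulr_suml.
  by apply: eq_bigr => q _; rewrite mulrCA mulrA.
rewrite (functional_extensionality _ _ inner).
rewrite -[I _]/(complex.Re (haarC I (fun U => \sum_q w q * G 0%N q U))).
rewrite haarC_sum // => [|q]; last exact: ccontM (ccont_cst _) (cG 0%N q).
congr complex.Re; apply: eq_bigr => q _.
rewrite haarCZ // mulrC mulr_sum_words; apply: eq_sum_words => s _.
by rewrite mulrCA.
Qed.

End IteratedIntegral.

Section ConjugateTranspose.
Variable R : realType.
Local Notation C := R[i].

Lemma conjc_i : ('i : C)^* = - 'i.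
Proof. by apply/eqP; rewrite eq_complex /= oppr0 !eqxx. Qed.

Lemma mulii : 'i * 'i = -1 :> C.
Proof. by apply/eqP; rewrite eq_complex /= !(mul0r, mulr0, mulr1) sub0r addr0 oppr0 !eqxx. Qed.

Lemma conjcM (x y : C) : (x * y)^* = x^* * y^*.
Proof. exact: rmorphM. Qed.

Lemma conjc_sum (J : Type) (r : seq J) (P : pred J) (F : J -> C) :
  (\sum_(j <- r | P j) F j)^* = \sum_(j <- r | P j) (F j)^*.
Proof. exact: rmorph_sum. Qed.

Lemma adj_map_trmx m n (A : 'M[C]_(m, n)) : adj A = (map_mx conjc A)^T.
Proof. by apply/matrixP => i j; rewrite !mxE. Qed.

Lemma adjM m n p (A : 'M[C]_(m, n)) (B : 'M[C]_(n, p)) :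
  adj (A *m B) = adj B *m adj A.
Proof. by rewrite !adj_map_trmx map_mxM trmx_mul. Qed.

Lemma adjD m n (A B : 'M[C]_(m, n)) : adj (A + B) = adj A + adj B.
Proof. by apply/matrixP => i j; rewrite !mxE rmorphD. Qed.

Lemma adjZ m n k (A : 'M[C]_(m, n)) : adj (k *: A) = k^* *: adj A.
Proof. by apply/matrixP => i j; rewrite !mxE rmorphM. Qed.

Lemma adj1 n : adj (1%:M : 'M[C]_n) = 1%:M.
Proof. by rewrite adj_map_trmx map_mx1 trmx1. Qed.

Lemma adj_perm_mx n (s : 'S_n) : adj (perm_mx s : 'M[C]_n) = perm_mx s^-1.
Proof. by rewrite adj_map_trmx map_perm_mx tr_perm_mx. Qed.

Lemma unitary_perm_mx n (s : 'S_n) : unitary (perm_mx s : 'M[C]_n).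
Proof. by rewrite /unitary adj_perm_mx -perm_mxM mulgV perm_mx1. Qed.

Lemma unitary_diag_mx n (r : 'rV[C]_n) :
  (forall j, r 0 j * (r 0 j)^* = 1) -> unitary (diag_mx r).
Proof.
move=> hr; rewrite /unitary adj_map_trmx map_diag_mx tr_diag_mx mulmx_diag.
by apply/matrixP => x y; rewrite !mxE hr.
Qed.

Lemma unitary_cos_isin_involution n (S : 'M[C]_n) (x y : C) :
  adj S = S -> S *m S = 1%:M -> x^* = x -> y^* = y -> x * x + y * y = 1 ->
  unitary (x *: 1%:M + (y * 'i) *: S).
Proof.
move=> hS hSS hx hy hxy.
rewrite /unitary adjD !adjZ adj1 hS conjcM hx hy conjc_i.
rewrite mulmxDl !mulmxDr -!scalemxAl -!scalemxAr !mul1mx !mulmx1 hSS !scalerA.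
apply/matrixP => u v; rewrite !mxE.
transitivity ((x * x + y * y * - ('i * 'i)) * (u == v)%:R); first by ring.
by rewrite mulii opprK mulr1 hxy mul1r.
Qed.

End ConjugateTranspose.

Section FourthMoments.
Variables (R : realType) (d : nat).
Local Notation C := R[i].
Local Notation M := 'M[C]_d.
Variable I : (M -> R) -> R.
Hypothesis hI : haar_integral I.
Variables a b c e : 'I_d.

Lemma conjugate_mxE (U B : M) x y :
  (adj U *m B *m U) x y = \sum_i \sum_j (U i x)^* * B i j * U j y.
Proof.
rewrite mxE exchange_big /=; apply: eq_bigr => j _; rewrite !mxE mulr_suml.
by apply: eq_bigr => i _; rewrite !mxE.
Qed.

Lemma ccont_conjugate_entry (B : M) x y :
  ccont_on_unitary (fun U : M => (adj U *m B *m U) x y).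
Proof.
rewrite (functional_extensionality _ _ (fun U => conjugate_mxE U B x y)).
apply: ccont_sum => i; apply: ccont_sum => j.
apply: ccontM; last exact: ccont_entry.
by apply: ccontM; [apply/ccont_conj/ccont_entry | apply: ccont_cst].
Qed.

Definition haar_form (B B' : M) : C :=
  haarC I (fun U => (adj U *m B *m U) a b * ((adj U *m B' *m U) c e)^*).

Definition moment (i j k l : 'I_d) : C :=
  haarC I (fun U => (U i a)^* * U j b * ((U k c)^* * U l e)^*).

Lemma ccont_haar_form_integrand (B B' : M) :
  ccont_on_unitary (fun U => (adj U *m B *m U) a b * ((adj U *m B' *m U) c e)^*).
Proof. by apply: ccontM; [|apply: ccont_conj]; apply: ccont_conjugate_entry. Qed.

Lemma ccont_moment_integrand i j k l :
  ccont_on_unitary (fun U : M => (U i a)^* * U j b * ((U k c)^* * U l e)^*).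
Proof.
by apply: ccontM; [apply: ccontM | apply/ccont_conj/ccontM];
   try apply: ccont_conj; apply: ccont_entry.
Qed.

Lemma haar_formE B B' : haar_form B B' =
  \sum_i \sum_j \sum_k \sum_l B i j * (B' k l)^* * moment i j k l.
Proof.
have integrandE U : (adj U *m B *m U) a b * ((adj U *m B' *m U) c e)^* =
    \sum_i \sum_j \sum_k \sum_l
      B i j * (B' k l)^* * ((U i a)^* * U j b * ((U k c)^* * U l e)^*).
  rewrite !conjugate_mxE conjc_sum mulr_suml; apply: eq_bigr => i _.
  rewrite mulr_suml; apply: eq_bigr => j _; rewrite mulr_sumr.
  apply: eq_bigr => k _; rewrite conjc_sum mulr_sumr; apply: eq_bigr => l _.
  by rewrite !conjcM conjcK; ring.
have cF i j k l := ccontM (ccont_cst (B i j * (B' k l)^*)) (ccont_moment_integrand i j k l).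
rewrite /haar_form (functional_extensionality _ _ integrandE).
rewrite haarC_sum // => [|i]; last by do 3 (apply: ccont_sum => ?).
apply: eq_bigr => i _; rewrite haarC_sum // => [|j]; last by do 2 (apply: ccont_sum => ?).
apply: eq_bigr => j _; rewrite haarC_sum // => [|k]; last by apply: ccont_sum => ?.
apply: eq_bigr => k _; rewrite haarC_sum //.
by apply: eq_bigr => l _; rewrite haarCZ //; exact: ccont_moment_integrand.
Qed.

Lemma haar_formZ x y B B' : haar_form (x *: B) (y *: B') = x * y^* * haar_form B B'.
Proof.
rewrite /haar_form -haarCZ //; last exact: ccont_haar_form_integrand.
congr haarC; apply: functional_extensionality => U.
by rewrite -!scalemxAr -!scalemxAl !mxE conjcM mulrACA.
Qed.

Lemma haar_form_conjugate W B B' : unitary W ->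
  haar_form (adj W *m B *m W) (adj W *m B' *m W) = haar_form B B'.
Proof.
move=> hW; rewrite /haar_form -(haarC_mulmxl hI hW (ccont_haar_form_integrand B B')).
by congr haarC; apply: functional_extensionality => U; rewrite !adjM !mulmxA.
Qed.

Lemma conjugate_delta_mx (W : M) i j :
  adj W *m delta_mx i j *m W = \matrix_(x, y) ((W i x)^* * W j y).
Proof.
apply/matrixP => x y; rewrite conjugate_mxE mxE (bigD1 i) //= (bigD1 j) //=.
rewrite !big1 ?addr0 => [|i' /negbTE ni|j' /negbTE nj].
- by rewrite mxE !eqxx mulr1.
- by apply: big1 => j' _; rewrite mxE ni mulr0 mul0r.
- by rewrite mxE eqxx nj mulr0 mul0r.
Qed.

Lemma haar_form_delta i j k l : haar_form (delta_mx i j) (delta_mx k l) = moment i j k l.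
Proof.
congr haarC; apply: functional_extensionality => U.
by rewrite !conjugate_delta_mx !mxE.
Qed.

Lemma moment_conjugate W i j k l : unitary W ->
  moment i j k l = haar_form (adj W *m delta_mx i j *m W) (adj W *m delta_mx k l *m W).
Proof. by move=> hW; rewrite haar_form_conjugate // haar_form_delta. Qed.

Lemma conjugate_diag_delta (r : 'rV[C]_d) i j :
  adj (diag_mx r) *m delta_mx i j *m diag_mx r = ((r 0 i)^* * r 0 j) *: delta_mx i j.
Proof.
rewrite conjugate_delta_mx; apply/matrixP => x y; rewrite !mxE (eq_sym x) (eq_sym y).
by case: (i == x); case: (j == y); rewrite ?mulr1n ?mulr0n ?conjc0 ?mulr0 ?mul0r ?mulr1.
Qed.

Lemma conjugate_perm_delta (s : 'S_d) i j :
  adj (perm_mx s : M) *m delta_mx i j *m perm_mx s = delta_mx (s i) (s j).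
Proof.
rewrite conjugate_delta_mx; apply/matrixP => x y; rewrite !mxE (eq_sym x) (eq_sym y).
by case: (s i == x); case: (s j == y); rewrite ?mulr1n ?mulr0n ?conjc0 ?conjc1 ?mulr0 ?mul0r ?mulr1.
Qed.

Lemma moment_perm (s : 'S_d) i j k l : moment i j k l = moment (s i) (s j) (s k) (s l).
Proof.
rewrite (@moment_conjugate (perm_mx s : M)); last exact: unitary_perm_mx.
by rewrite !conjugate_perm_delta haar_form_delta.
Qed.

Definition phase (m x : 'I_d) : C := if x == m then 'i else 1.

Lemma phase_unimodular m x : phase m x * (phase m x)^* = 1.
Proof.
by rewrite /phase; case: (x == m); rewrite ?conjc1 ?mulr1 // conjc_i mulrN mulii opprK.
Qed.

Lemma phase_id m : phase m m = 'i.
Proof. by rewrite /phase eqxx. Qed.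

Lemma phase_neq m x : x != m -> phase m x = 1.
Proof. by rewrite /phase => /negbTE ->. Qed.

Lemma moment_phase m i j k l : moment i j k l =
  (phase m i)^* * phase m j * (phase m k * (phase m l)^*) * moment i j k l.
Proof.
pose r := \row_x phase m x.
have hr x : r 0 x * (r 0 x)^* = 1 by rewrite mxE phase_unimodular.
rewrite {1}(@moment_conjugate (diag_mx r)); last exact: unitary_diag_mx.
by rewrite !conjugate_diag_delta haar_formZ haar_form_delta conjcM conjcK !mxE.
Qed.

Lemma moment_eq0 i j k l :
  ~~ ((i == j) && (k == l)) -> ~~ ((i == k) && (j == l)) -> moment i j k l = 0.
Proof.
(* In each case some [phase m] multiplies the moment by 'i, - 'i or -1. *)
have fixed_eq0 (f x : C) : complex.Re f != 1 -> x = f * x -> x = 0.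
  move=> f1 E; apply/eqP; have : (1 - f) * x == 0 by rewrite mulrBl mul1r -E subrr.
  by rewrite mulf_eq0 subr_eq0 orbC => /orP[//|/eqP f_1]; rewrite -f_1 eqxx in f1.
have Re_i : complex.Re 'i != 1 :> R by rewrite eq_sym oner_eq0.
have [<-|nij] := eqVneq i j.
  move=> /= nkl _; apply: (fixed_eq0 'i) => //; rewrite eq_sym in nkl.
  rewrite {1}(moment_phase k) [(phase k i)^* * _]mulrC phase_unimodular phase_id.
  by rewrite (phase_neq nkl) conjc1 mulr1 mul1r.
have [<-|nik] := eqVneq i k.
  move=> /= _ njl; apply: (fixed_eq0 'i) => //; rewrite eq_sym in njl.
  rewrite {1}(moment_phase j) phase_id (phase_neq nij) (phase_neq njl).
  by rewrite conjc1 !mulr1 mul1r.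
move=> _ _; rewrite eq_sym in nij; rewrite eq_sym in nik.
have [->|nli] := eqVneq l i.
  apply: (fixed_eq0 (- 'i * - 'i)).
    by rewrite mulrNN mulii /= eq_sym -subr_eq0 opprK; apply/eqP => h; lra.
  rewrite {1}(moment_phase i) phase_id (phase_neq nij) (phase_neq nik).
  by rewrite conjc_i mul1r mulr1.
apply: (fixed_eq0 (- 'i)); first by rewrite /= oppr0 eq_sym oner_eq0.
rewrite {1}(moment_phase i) phase_id (phase_neq nij) (phase_neq nik) (phase_neq nli).
by rewrite conjc_i conjc1 !mulr1.
Qed.

Variables i0 i1 : 'I_d.
Hypothesis i01 : i0 != i1.

Lemma perm_of_pair i k : i != k -> exists s : 'S_d, s i0 = i /\ s i1 = k.
Proof.
move=> ik; pose t := tperm i0 i.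
have ti1 : t i1 != t i0 by rewrite (inj_eq perm_inj) eq_sym.
rewrite tpermL in ti1.
by exists (t * tperm (t i1) k)%g; rewrite !permM tpermL tpermL tpermD // eq_sym.
Qed.

Definition moment_iijj := moment i0 i0 i1 i1.
Definition moment_ijij := moment i0 i1 i0 i1.
Definition moment_iiii := moment i0 i0 i0 i0.

Lemma moment_iikkE i k : i != k -> moment i i k k = moment_iijj.
Proof. by case/perm_of_pair=> s [<- <-]; rewrite /moment_iijj [RHS](moment_perm s). Qed.

Lemma moment_ijijE i j : i != j -> moment i j i j = moment_ijij.
Proof. by case/perm_of_pair=> s [<- <-]; rewrite /moment_ijij [RHS](moment_perm s). Qed.

Lemma moment_iiiiE i : moment i i i i = moment_iiii.
Proof. by rewrite /moment_iiii [RHS](moment_perm (tperm i0 i)) tpermL. Qed.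

Lemma momentE i j k l : moment i j k l =
  moment_iijj * (i == j)%:R * (k == l)%:R + moment_ijij * (i == k)%:R * (j == l)%:R +
  (moment_iiii - moment_iijj - moment_ijij) * (i == j)%:R * (i == k)%:R * (i == l)%:R.
Proof.
have [<-|nij] := eqVneq i j.
  have [<-|nik] := eqVneq i k.
    have [<-|nil] := eqVneq i l; last by rewrite moment_eq0 ?eqxx ?(negbTE nil) //=; ring.
    by rewrite moment_iiiiE /=; ring.
  have [<-|nkl] := eqVneq k l; first by rewrite moment_iikkE //=; ring.
  by rewrite moment_eq0 ?eqxx ?(negbTE nik) ?(negbTE nkl) //=; ring.
have [<-|nik] := eqVneq i k.
  have [<-|njl] := eqVneq j l; first by rewrite moment_ijijE //=; ring.
  by rewrite moment_eq0 ?eqxx ?(negbTE nij) ?(negbTE njl) //=; ring.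
by rewrite moment_eq0 ?eqxx ?(negbTE nij) ?(negbTE nik) //=; ring.
Qed.

Lemma sum_mul_eq_natr (F : 'I_d -> C) i : \sum_j F j * (i == j)%:R = F i.
Proof.
rewrite (bigD1 i) //= eqxx mulr1 big1 ?addr0 // => j.
by rewrite eq_sym => /negbTE ->; rewrite mulr0.
Qed.

Lemma haar_form_momentE B B' : haar_form B B' =
  moment_iijj * \sum_i \sum_k B i i * (B' k k)^* +
  moment_ijij * \sum_i \sum_j B i j * (B' i j)^* +
  (moment_iiii - moment_iijj - moment_ijij) * \sum_i B i i * (B' i i)^*.
Proof.
set al := moment_iijj; set be := moment_ijij; set ka := _ - _ - _.
pose X i j k l := B i j * (B' k l)^*.
have sum_l i j k : \sum_l X i j k l * moment i j k l =
    al * (i == j)%:R * X i j k k + be * (i == k)%:R * X i j k j +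
    ka * (i == j)%:R * (i == k)%:R * X i j k i.
  rewrite -(sum_mul_eq_natr (fun l => al * (i == j)%:R * X i j k l)).
  rewrite -(sum_mul_eq_natr (fun l => be * (i == k)%:R * X i j k l)).
  rewrite -(sum_mul_eq_natr (fun l => ka * (i == j)%:R * (i == k)%:R * X i j k l)).
  by rewrite -!big_split; apply: eq_bigr => l _; rewrite momentE -/ka -/al -/be /=; ring.
have sum_kl i j : \sum_k \sum_l X i j k l * moment i j k l =
    al * (i == j)%:R * \sum_k X i j k k + be * X i j i j + ka * (i == j)%:R * X i j i i.
  under eq_bigr do rewrite sum_l.
  rewrite -(sum_mul_eq_natr (fun k => be * X i j k j)).
  rewrite -(sum_mul_eq_natr (fun k => ka * (i == j)%:R * X i j k i)).
  by rewrite mulr_sumr -!big_split; apply: eq_bigr => k _ /=; ring.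
rewrite haar_formE; under eq_bigr do under eq_bigr do rewrite sum_kl.
rewrite !mulr_sumr -!big_split; apply: eq_bigr => i _ /=.
rewrite -(sum_mul_eq_natr (fun j => al * \sum_k X i j k k)).
rewrite -(sum_mul_eq_natr (fun j => ka * X i j i i)).
by rewrite mulr_sumr -!big_split; apply: eq_bigr => j _; rewrite /= /X; ring.
Qed.

Definition rot : M := (3%:R / 5%:R) *: 1%:M + (4%:R / 5%:R * 'i) *: tperm_mx i0 i1.

Lemma conjc_fifth m : (m%:R / 5%:R : C)^* = m%:R / 5%:R.
Proof. by rewrite conjcM conjc_inv !conjc_nat. Qed.

Lemma rot_unitary : unitary rot.
Proof.
apply: unitary_cos_isin_involution; rewrite ?conjc_fifth //.
- by rewrite adj_perm_mx tpermV.
- by rewrite -perm_mxM tperm2 perm_mx1.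
- by field.
Qed.

Lemma rot_row_sqnorm y : (rot i0 y)^* * rot i0 y =
  if y == i0 then 9%:R / 25%:R else if y == i1 then 16%:R / 25%:R else 0.
Proof.
have -> : rot i0 y = 3%:R / 5%:R * (i0 == y)%:R + 4%:R / 5%:R * 'i * (i1 == y)%:R.
  by rewrite !mxE tpermL.
rewrite (eq_sym i0) (eq_sym i1).
have [->|y0] := eqVneq y i0.
  by rewrite (negbTE i01) mulr1n mulr0n mulr0 addr0 mulr1 conjc_fifth; field.
have [_|y1] := eqVneq y i1; last by rewrite !mulr0n !mulr0 addr0 conjc0 mul0r.
rewrite mulr1n mulr0n mulr0 add0r mulr1 conjcM conjc_fifth conjc_i.
transitivity (- (4%:R / 5%:R) ^+ 2 * ('i * 'i) : C); first by ring.
by rewrite mulii; field.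
Qed.

(* [rot] conjugates [delta_mx i0 i0] into B with diagonal (9/25, 16/25, 0, ...):
   [haar_form_momentE] then gives two expansions of [moment_iiii] whose last
   terms differ by the factor 1 - ((9/25)^2 + (16/25)^2) != 0. *)
Lemma moment_iiii_add : moment_iiii = moment_iijj + moment_ijij.
Proof.
pose p y : C := (rot i0 y)^* * rot i0 y.
have p_out y : y != i0 -> y != i1 -> p y = 0.
  by rewrite /p rot_row_sqnorm => /negbTE -> /negbTE ->.
have p0 : p i0 = 9%:R / 25%:R by rewrite /p rot_row_sqnorm eqxx.
have p1 : p i1 = 16%:R / 25%:R.
  by rewrite /p rot_row_sqnorm eqxx eq_sym (negbTE i01).
have real_p y : (p y)^* = p y by rewrite conjcM conjcK mulrC.
pose B : M := \matrix_(x, y) ((rot i0 x)^* * rot i0 y).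
have Bdiag x : B x x = p x by rewrite mxE.
have BE x y : B x y * (B x y)^* = p x * p y by rewrite mxE /p !conjcM conjcK; ring.
have sum2 (F : 'I_d -> C) := @big_pair _ _ _ _ F i01.
have n25 : (25%:R : C) != 0 by rewrite pnatr_eq0.
have S1 : \sum_i \sum_k B i i * (B k k)^* = 1.
  rewrite sum2 => [|x x0 x1]; last by apply: big1 => k _; rewrite Bdiag p_out ?mul0r.
  rewrite !sum2 => [|x x0 x1|x x0 x1]; try by rewrite !Bdiag (p_out x) ?conjc0 ?mulr0.
  by rewrite !Bdiag !real_p p0 p1; field.
have S2 : \sum_i \sum_j B i j * (B i j)^* = 1.
  rewrite sum2 => [|x x0 x1]; last by apply: big1 => k _; rewrite BE p_out ?mul0r.
  rewrite !sum2 => [|x x0 x1|x x0 x1]; try by rewrite BE (p_out x) ?mulr0.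
  by rewrite !BE p0 p1; field.
have S3 : \sum_i B i i * (B i i)^* = 337%:R / 625%:R.
  rewrite sum2 => [|x x0 x1]; last by rewrite BE p_out ?mul0r.
  by rewrite !BE p0 p1; field.
have := haar_form_momentE B B.
rewrite S1 S2 S3 /B -conjugate_delta_mx -(moment_conjugate _ _ _ _ rot_unitary) -/moment_iiii => E.
apply/eqP; rewrite -subr_eq0 opprD addrA; apply/eqP.
have n0 : (1 - 337%:R / 625%:R : C) != 0.
  have -> : (1 - 337%:R / 625%:R : C) = 288%:R / 625%:R by field.
  by rewrite mulf_neq0 ?invr_eq0 ?pnatr_eq0.
by apply: (mulIf n0); rewrite mul0r mulrBr mulr1 {1}E; ring.
Qed.

Lemma haar_form_traceless (L : M) : \tr L = 0 -> \tr (L *m adj L) = d%:R ->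
  haar_form (adj L) (adj L) = moment_ijij * d%:R.
Proof.
move=> trL normL; rewrite haar_form_momentE moment_iiii_add -normL.
have -> : \sum_i \sum_k adj L i i * (adj L k k)^* = 0.
  under eq_bigr do rewrite -mulr_sumr -conjc_sum.
  rewrite -mulr_suml.
  suff -> : \sum_i adj L i i = (\tr L)^* by rewrite trL conjc0 mul0r.
  by rewrite /mxtrace conjc_sum; apply: eq_bigr => i _; rewrite mxE.
have -> : \sum_i \sum_j adj L i j * (adj L i j)^* = \tr (L *m adj L).
  rewrite exchange_big; apply: eq_bigr => j _; rewrite mxE; apply: eq_bigr => i _.
  by rewrite !mxE conjcK mulrC.
ring.
Qed.

End FourthMoments.

Lemma abs2E (R : realType) (z : R[i]) : abs2 z = complex.Re (z * z^*).
Proof. by case: z => x y; rewrite /abs2 /= !expr2 mulrN opprK. Qed.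

Lemma Rfun_sum_words (R : realType) d N (rho : 'M[R[i]]_(d ^ N))
    (I : ('M[R[i]]_d -> R) -> R) (hI : haar_integral I)
    (kap : seq ('I_d * 'I_d) -> R[i])
    (kapE : forall Y : nat -> 'M[R[i]]_d, \tr (rho *m tensN N Y) =
      sum_words N (fun s => kap s * prod_word s (fun m p => Y m p.1 p.2)))
    (lam : nat -> 'M[R[i]]_d) :
  Rfun I rho lam = complex.Re (sum_words N (fun qs =>
    kap (unzip1 qs) * (kap (unzip2 qs))^* *
    prod_word qs (fun m q => haar_form I q.1.1 q.1.2 q.2.1 q.2.2
                               (adj (lam m)) (adj (lam m))))).
Proof.
rewrite /Rfun -(iter_int_multilinear hI); last first.
  by move=> m q; exact: ccont_haar_form_integrand.
congr iter_int; apply: functional_extensionality => Us.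
rewrite abs2E kapE conj_sum_words sum_words_mul; congr complex.Re.
by apply: eq_sum_words => qs _; rewrite conjcM conj_prod_word mulrACA prod_word_unzip.
Qed.

Theorem theorem9 (R : realType) (d N : nat) (hd : (2 <= d)%N) (hN : (1 <= N)%N)
  (rho : 'M[R[i]]_(d ^ N)) (hrho : is_state rho)
  (I : ('M[R[i]]_d -> R) -> R) (hI : haar_integral I)
  (lam mu : nat -> 'M[R[i]]_d)
  (hlam : forall n, (n < N)%N ->
     \tr (lam n) = 0 /\ \tr (lam n *m adj (lam n)) = d%:R)
  (hmu : forall n, (n < N)%N ->
     \tr (mu n) = 0 /\ \tr (mu n *m adj (mu n)) = d%:R) :
  Rfun I rho lam = Rfun I rho mu.
Proof.
pose i0 : 'I_d := Ordinal (ltnW hd); pose i1 : 'I_d := Ordinal hd.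
have i01 : i0 != i1 by [].
have [kap kapE] := mxtrace_mul_tensN rho.
rewrite !(Rfun_sum_words hI kapE); congr complex.Re.
apply: eq_sum_words => qs size_qs; congr (_ * _).
apply: eq_prod_word => m q; rewrite size_qs => hm.
have [tr_lam norm_lam] := hlam m hm; have [tr_mu norm_mu] := hmu m hm.
by rewrite !(haar_form_traceless hI _ _ _ _ i01).
Qed.
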